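(* Let $G=(V,E,H)$ be a HEDG and $W,X,Y,Z\subseteq V$ with $(X\cup Y\cup Z)\cap W=\emptyset$. Then $X$ is $\sigma$-separated from $Y$ given $Z$ in $G$ if and only if $X$ is $\sigma$-separated from $Y$ given $Z$ in the marginalization $G^{\mathrm{marg}\setminus W}$.
   Context: HEDG $G=(V,E,H)$: $V$ finite, $E\subseteq V\times V$ (self-loops allowed), $H$ a simplicial complex on $V$ (contains all singletons, closed under subsets); for distinct $v,w$, $v\leftrightarrow w$ means $\{v,w\}\in H$. $\mathrm{Anc}^G(v)$ ($\mathrm{Desc}^G(v)$): nodes with a directed path to (from) $v$, including $v$; $\mathrm{Sc}^G(v)=\mathrm{Anc}^G(v)\cap\mathrm{Desc}^G(v)$. Marginalization $G^{\mathrm{marg}\setminus W}=(V\setminus W,E',H')$: $v_1\to v_2\in E'$ iff $G$ has a directed path $v_1\to u_1\to\cdots\to u_r\to v_2$ with $r\ge0$, all $u_i\in W$; $F'\subseteq V\setminus W$ is in $H'$ iff there is $F\in H$ with $F\subseteq F'\cup W$ such that each $v\in F'$ either lies in $F\setminus W$ or there is a directed path $u_1\to\cdots\to u_r\to v$, $r\ge1$, all $u_i\in W$, $u_1\in F\cap W$. A path is a node sequence $v_1,\dots,v_n$ ($n\ge1$, repetitions allowed) with consecutive nodes joined by $\to$, $\leftarrow$ or $\leftrightarrow$. It is $Z$-$\sigma$-blocked if (a) $v_1\in Z$ or $v_n\in Z$; or (b) some intermediate $v_i$ is a collider (both adjacent edges have an arrowhead at $v_i$) with $v_i\notin\mathrm{Anc}^G(Z)$;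 or (c) some intermediate non-collider $v_i\in Z$ has, on the path, an outgoing directed edge $v_i\to v_{i+1}$ with $v_{i+1}\notin\mathrm{Sc}^G(v_i)$ or $v_{i-1}\leftarrow v_i$ with $v_{i-1}\notin\mathrm{Sc}^G(v_i)$. $X$ is $\sigma$-separated from $Y$ given $Z$ if every path with one endnode in $X$ and the other in $Y$ is $Z$-$\sigma$-blocked. *)

From mathcomp Require Import all_boot.
Set Implicit Arguments. Unset Strict Implicit. Unset Printing Implicit Defensive.

(* A HEDG over a finite ambient type T: node set [nodes] (V),
   directed edges [edge] (E, self-loops allowed), hyperedges [hyp] (H). *)
Record hedg (T : finType) := Hedg {
  nodes : {set T};
  edge  : rel T;
  hyp   : {set {set T}} }.

Section HEDG.
Variable T : finType.
Implicit Types (G : hedg T) (W X Y Z : {set T}).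

Definition hedg_wf G :=
  [/\ (forall a b, edge G a b -> (a \in nodes G) && (b \in nodes G)),
      (forall F : {set T}, F \in hyp G -> F \subset nodes G),
      (forall v, v \in nodes G -> [set v] \in hyp G) &
      (forall F F' : {set T}, F \in hyp G -> F' \subset F -> F' \in hyp G)].

Definition eN G : rel T := fun a b => [&& a \in nodes G, b \in nodes G & edge G a b].

Definition Anc G (v : T) : {set T} := [set u | connect (eN G) u v].
Definition Desc G (v : T) : {set T} := [set u | connect (eN G) v u].
Definition Sc G (v : T) : {set T} := Anc G v :&: Desc G v.
Definition AncS G Z : {set T} := \bigcup_(z in Z) Anc G z.

Definition eW G W : rel T := fun a b => [&& a \in W, b \in W & edge G a b].

Definition Wreach G W (u v : T) : bool :=
  (u \in W) && [exists ur, [&& ur \in W, connect (eW G W) u ur & edge G ur v]].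

Definition marg G W : hedg T :=
  let N' := nodes G :\: W in
  @Hedg T N'
    (fun a b => [&& a \in N', b \in N' &
                 edge G a b || [exists u1, Wreach G W u1 b && edge G a u1]])
    [set F' : {set T} | (F' \subset N') &&
       [exists F in hyp G, (F \subset F' :|: W) &&
          [forall v in F', (v \in F :\: W) ||
                           [exists u1 in F :&: W, Wreach G W u1 v]]]].

(* Paths: a start node and a list of steps (edge kind, next node). *)
Inductive ekind := Fwd (* v_i -> v_{i+1} *) | Bwd (* v_i <- v_{i+1} *) | Bi .

Definition step_ok G (a : T) (k : ekind) (b : T) : bool :=
  [&& a \in nodes G, b \in nodes G &
      match k with
      | Fwd => edge G a b
      | Bwd => edge G b a
      | Bi => (a != b) && ([set a; b] \in hyp G)
      end].

Fixpoint walk_ok G (a : T) (s : seq (ekind * T)) : bool :=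
  match s with
  | [::] => a \in nodes G
  | (k, b) :: s' => step_ok G a k b && walk_ok G b s'
  end.

Definition head_at_next (k : ekind) : bool := if k is Bwd then false else true.
Definition head_at_prev (k : ekind) : bool := if k is Fwd then false else true.

Definition pnode (v0 : T) (s : seq (ekind * T)) (i : nat) : T := nth v0 (v0 :: map snd s) i.
Definition pkind (s : seq (ekind * T)) (j : nat) : ekind := nth Fwd (map fst s) j.
Definition plast (v0 : T) (s : seq (ekind * T)) : T := last v0 (map snd s).

(* intermediate node i (0 < i < size s) is a collider *)
Definition collider (s : seq (ekind * T)) (i : nat) : bool :=
  head_at_next (pkind s i.-1) && head_at_prev (pkind s i).

Definition sigma_blocked G Z (v0 : T) (s : seq (ekind * T)) : bool :=
  [|| v0 \in Z, plast v0 s \in Z |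
   [exists i : 'I_(size s), (0 < i) &&
      ((collider s i && (pnode v0 s i \notin AncS G Z)) ||
       [&& ~~ collider s i, pnode v0 s i \in Z &
           ((if pkind s i is Fwd then true else false) &&
              (pnode v0 s i.+1 \notin Sc G (pnode v0 s i)))
        || ((if pkind s i.-1 is Bwd then true else false) &&
              (pnode v0 s i.-1 \notin Sc G (pnode v0 s i)))])]].

Definition sigma_sep G X Y Z : Prop :=
  forall (v0 : T) (s : seq (ekind * T)), walk_ok G v0 s ->
    ((v0 \in X) && (plast v0 s \in Y)) || ((v0 \in Y) && (plast v0 s \in X)) ->
    sigma_blocked G Z v0 s.

End HEDG.

From mathcomp Require Import all_boot.
Set Implicit Arguments. Unset Strict Implicit. Unset Printing Implicit Defensive.

(* Write a walk as a list of steps; it is sigma-open iff its endpoints lie outside Z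
   and every junction between two consecutive steps is open.  Marginalizing W does
   not change the directed reachability between nodes outside W, so ancestors of Z and
   strongly connected components, and with them the blocking conditions at such
   nodes, are the same in G and in the marginal M.
   An open walk of M lifts to G by expanding each edge of M into the directed paths
   through W that it abbreviates; their inner nodes lie in W, hence are non-colliders
   outside Z.  Conversely an open walk of G is projected onto M step by step, by
   induction on the part still to be projected, following how the current node outside
   W is attached to the node of W where the walk continues: below it, above it, or
   through a hyperedge.  A collider in W is an ancestor of Z, hence has a descendant
   outside W that is an ancestor of Z; the projected walk makes a detour through that
   node along a bidirected edge of M. *)

Section Ancestors.
Variables (T : finType) (G : hedg T).
Implicit Types (Z : {set T}) (a b v w z : T).

Lemma ScE a b : (a \in Sc G b) = connect (eN G) a b && connect (eN G) b a.
Proof. by rewrite !inE. Qed.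

Lemma AncSP Z v : reflect (exists2 z, z \in Z & connect (eN G) v z) (v \in AncS G Z).
Proof.
apply: (iffP bigcupP) => [[z zZ]|[z zZ vz]]; first by rewrite inE; exists z.
by exists z; rewrite // inE.
Qed.

Lemma AncS_connect Z v w : connect (eN G) v w -> w \in AncS G Z -> v \in AncS G Z.
Proof. by move=> vw /AncSP[z zZ wz]; apply/AncSP; exists z => //; apply: connect_trans vw wz. Qed.

Lemma mem_AncS Z z : z \in Z -> z \in AncS G Z.
Proof. by move=> zZ; apply/AncSP; exists z. Qed.

End Ancestors.

Section Steps.
Variable T : finType.
Implicit Types (G : hedg T) (Z : {set T}) (a b v : T) (s : seq (ekind * T)).

Record step := Step { src : T; kind : ekind; dst : T }.
Implicit Types (t : step) (ms : seq step).

Definition step_valid G t := step_ok G (src t) (kind t) (dst t).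

Definition sc_at_src G t := if kind t is Fwd then dst t \in Sc G (src t) else true.
Definition sc_at_dst G t := if kind t is Bwd then src t \in Sc G (dst t) else true.

(* [hl]/[hr]: arrowheads at [v] of the edges to its left/right; [okl]/[okr]:
   those edges satisfy the [Sc] condition (c) at [v]. *)
Definition open_at G Z v (hl okl hr okr : bool) :=
  if hl && hr then v \in AncS G Z else (v \in Z) ==> (okl && okr).

Definition open_junction G Z t1 t2 :=
  open_at G Z (dst t1) (head_at_next (kind t1)) (sc_at_dst G t1)
                       (head_at_prev (kind t2)) (sc_at_src G t2).

(* The walk [ms] starts at [a] as if entered by an edge described by [hl], [okl];
   a genuine endpoint of a walk has the neutral context [false], [true]. *)
Definition open_from G Z a (hl okl : bool) ms :=
  if ms is t :: ms' then
    open_at G Z a hl okl (head_at_prev (kind t)) (sc_at_src G t) && path (open_junction G Z) t ms'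
  else true.

Lemma open_from_cons G Z a hl okl t ms :
  open_from G Z a hl okl (t :: ms) =
  open_at G Z a hl okl (head_at_prev (kind t)) (sc_at_src G t) &&
  open_from G Z (dst t) (head_at_next (kind t)) (sc_at_dst G t) ms.
Proof. by case: ms. Qed.

Lemma path_open_junction G Z t ms :
  path (open_junction G Z) t ms =
  open_from G Z (dst t) (head_at_next (kind t)) (sc_at_dst G t) ms.
Proof. by case: ms. Qed.

Lemma open_from_collider G Z a t ms :
  open_from G Z a true true (t :: ms) -> head_at_prev (kind t) -> a \in AncS G Z.
Proof. by rewrite /= /open_at => /andP[+ _] hp; rewrite hp. Qed.

Lemma open_from_neutral G Z a hl okl ms :
  a \notin Z -> open_from G Z a hl okl ms -> open_from G Z a false true ms.
Proof. by move=> aZ; case: ms => //= t ms /andP[_ ->]; rewrite /open_at /= (negbTE aZ). Qed.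

Fixpoint chained a ms :=
  if ms is t :: ms' then (src t == a) && chained (dst t) ms' else true.

Definition steps_end a ms := last a (map dst ms).

Lemma chained_cat a ms1 ms2 :
  chained a (ms1 ++ ms2) = chained a ms1 && chained (steps_end a ms1) ms2.
Proof. by elim: ms1 a => [|t ms1 IH] a //=; rewrite IH andbA. Qed.

Lemma steps_end_cat a ms1 ms2 : steps_end a (ms1 ++ ms2) = steps_end (steps_end a ms1) ms2.
Proof. by rewrite /steps_end map_cat last_cat. Qed.

Lemma steps_end_cons a t ms : steps_end a (t :: ms) = dst (last t ms).
Proof. by rewrite /steps_end /= last_map. Qed.

Lemma open_from_cat G Z a hl okl t ms ms' :
  open_from G Z a hl okl (t :: ms ++ ms') =
  open_from G Z a hl okl (t :: ms) &&
  open_from G Z (dst (last t ms)) (head_at_next (kind (last t ms))) (sc_at_dst G (last t ms)) ms'.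
Proof. by rewrite /= cat_path andbA -path_open_junction. Qed.

Fixpoint steps_of a s :=
  if s is (k, b) :: s' then Step a k b :: steps_of b s' else [::].

Definition walk_of ms := map (fun t => (kind t, dst t)) ms.

Lemma walk_ofK a ms : chained a ms -> steps_of a (walk_of ms) = ms.
Proof. by elim: ms a => [|[a' k b] ms IH] a //= /andP[/eqP -> /IH ->]. Qed.

Lemma chained_steps_of a s : chained a (steps_of a s).
Proof. by elim: s a => [|[k b] s IH] a //=; rewrite eqxx IH. Qed.

Lemma plastE a s : plast a s = steps_end a (steps_of a s).
Proof. by elim: s a => [|[k b] s IH] a //=; have := IH b; rewrite /plast /steps_end /=. Qed.

Lemma walk_okE G a s : walk_ok G a s = (a \in nodes G) && all (step_valid G) (steps_of a s).
Proof.
elim: s a => [|[k b] s IH] a /=; first by rewrite andbT.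
by rewrite IH /step_valid /step_ok /=; case: (a \in nodes G); case: (b \in nodes G).
Qed.

Lemma size_steps_of a s : size (steps_of a s) = size s.
Proof. by elim: s a => [|[k b] s IH] a //=; rewrite IH. Qed.

Lemma nth_steps_of t0 a s j : j < size s ->
  nth t0 (steps_of a s) j = Step (pnode a s j) (pkind s j) (pnode a s j.+1).
Proof.
elim: s a j => [|[k b] s IH] a [|j] //= lt_j_s; rewrite IH // /pnode /=.
by congr Step; apply: set_nth_default; rewrite /= size_map // ltnS ltnW.
Qed.

Lemma blocked_junctionE G Z v0 s j :
  (collider s j.+1 && (pnode v0 s j.+1 \notin AncS G Z)) ||
  [&& ~~ collider s j.+1, pnode v0 s j.+1 \in Z &
     ((if pkind s j.+1 is Fwd then true else false) &&
        (pnode v0 s j.+2 \notin Sc G (pnode v0 s j.+1)))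
  || ((if pkind s j.+1.-1 is Bwd then true else false) &&
        (pnode v0 s j.+1.-1 \notin Sc G (pnode v0 s j.+1)))]
  = ~~ open_junction G Z (Step (pnode v0 s j) (pkind s j) (pnode v0 s j.+1))
                         (Step (pnode v0 s j.+1) (pkind s j.+1) (pnode v0 s j.+2)).
Proof.
rewrite /open_junction /open_at /sc_at_src /sc_at_dst /collider /=.
move: (pnode v0 s j) (pnode v0 s j.+1) (pnode v0 s j.+2) => x y z.
case: (pkind s j); case: (pkind s j.+1) => /=;
by case: (y \in AncS G Z); case: (y \in Z); case: (x \in Sc G y); case: (z \in Sc G y).
Qed.

Lemma sigma_blockedE G Z v0 s :
  sigma_blocked G Z v0 s =
  ~~ [&& v0 \notin Z, plast v0 s \notin Z & open_from G Z v0 false true (steps_of v0 s)].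
Proof.
rewrite /sigma_blocked; case v0Z: (v0 \in Z); case: (plast v0 s \in Z) => //=.
case: s => [|[k b] s]; first by apply/negbTE/existsP => -[[]].
set s' := (k, b) :: s; set t0 := Step v0 k b.
have nth_s' j : j < size s' -> nth t0 (t0 :: steps_of b s) j = nth t0 (steps_of v0 s') j by [].
have nth_s j : nth t0 (steps_of b s) j = nth t0 (steps_of v0 s') j.+1 by [].
rewrite /= /open_at v0Z /=; apply/existsP/idP => [[[[|j] lt_j] /andP[// _]] | /(pathP t0) open].
  move=> blocked; apply/(pathP t0) => /(_ j); rewrite size_steps_of -ltnS => /(_ lt_j).
  rewrite nth_s' ?nth_s ?nth_steps_of // ?(ltnW lt_j) //.
  by move: blocked; rewrite blocked_junctionE => /negP.
have [j lt_j closed_j] : exists2 j, j < size s &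
    ~~ open_junction G Z (nth t0 (t0 :: steps_of b s) j) (nth t0 (steps_of b s) j).
  case: (pickP [pred j : 'I_(size s) | ~~ open_junction G Z (nth t0 (t0 :: steps_of b s) j)
                                                   (nth t0 (steps_of b s) j)]) => [j ? | none].
    by exists j.
  case: open => j; rewrite size_steps_of => lt_j; by have /negbFE := none (Ordinal lt_j).
have lt_j1 : j.+1 < size s' by [].
exists (Ordinal lt_j1); move: closed_j.
by rewrite nth_s' ?nth_s ?nth_steps_of // ?(ltnW lt_j1) // -blocked_junctionE.
Qed.

Definition open_walk G Z a b ms : Prop :=
  [/\ a \in nodes G, chained a ms, all (step_valid G) ms, steps_end a ms = b &
      [&& a \notin Z, b \notin Z & open_from G Z a false true ms]].

Lemma sigma_sepP G X Y Z :
  sigma_sep G X Y Z <->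
  forall a b ms, (a \in X) && (b \in Y) || (a \in Y) && (b \in X) -> ~ open_walk G Z a b ms.
Proof.
split=> [sep a b ms ends [aV chain valid end_b open] | sep v0 s].
  have := sep a (walk_of ms); rewrite walk_okE sigma_blockedE plastE walk_ofK // aV valid end_b.
  by move=> /(_ isT ends); rewrite open.
rewrite walk_okE sigma_blockedE plastE => /andP[v0V valid] ends; apply/negP => open.
by apply: (sep _ _ (steps_of v0 s) ends); split=> //; apply: chained_steps_of.
Qed.

End Steps.

Section Marginal.
Variables (T : finType) (G : hedg T) (W : {set T}).
Hypothesis wfG : hedg_wf G.
Implicit Types (a b c u v w : T) (F : {set T}).

Local Notation M := (marg G W).
Local Notation V' := (nodes G :\: W).

Lemma V'_notin_W a : a \in V' -> a \notin W.
Proof. by case/setDP. Qed.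

Lemma edge_nodes a b : edge G a b -> (a \in nodes G) && (b \in nodes G).
Proof. by case: wfG => + _ _ _; apply. Qed.

Lemma hyp1 v : v \in nodes G -> [set v] \in hyp G.
Proof. by case: wfG => _ _ + _; apply. Qed.

Lemma eNE a b : eN G a b = edge G a b.
Proof. by rewrite /eN; case ab: (edge G a b); rewrite ?andbF // andbT edge_nodes. Qed.

Lemma connect_eW_in_W u v : u \in W -> connect (eW G W) u v -> v \in W.
Proof.
move=> uW /connectP[p + ->].
by elim: p u uW => [|x p IH] u uW //= /andP[/and3P[_ xW _]]; apply: IH.
Qed.

Lemma connect_eW_eN u v : connect (eW G W) u v -> connect (eN G) u v.
Proof. by apply: connect_sub => x y /and3P[_ _ xy]; apply: connect1; rewrite eNE. Qed.

Lemma WreachP u v :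
  reflect (exists2 w, [/\ u \in W, w \in W & connect (eW G W) u w] & edge G w v)
          (Wreach G W u v).
Proof.
apply: (iffP andP) => [[uW /existsP[w /and3P[]]]|[w [uW wW uw] wv]]; first by exists w.
by split=> //; apply/existsP; exists w; rewrite wW uw wv.
Qed.

Lemma Wreach_in_W u v : Wreach G W u v -> u \in W.
Proof. by case/andP. Qed.

Lemma Wreach_edge u v : u \in W -> edge G u v -> Wreach G W u v.
Proof. by move=> uW uv; apply/WreachP; exists u; rewrite ?connect0. Qed.

Lemma connect_Wreach u v w : u \in W -> connect (eW G W) u v -> Wreach G W v w -> Wreach G W u w.
Proof.
move=> uW uv /WreachP[x [_ xW vx] xw]; apply/WreachP; exists x => //.
by split=> //; apply: connect_trans uv vx.
Qed.

Lemma Wreach_trans u v w : Wreach G W u v -> Wreach G W v w -> Wreach G W u w.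
Proof.
move=> /WreachP[x [uW xW ux] xv] vw; apply: (connect_Wreach uW _ vw).
by apply: connect_trans ux (connect1 _); rewrite /eW xW (Wreach_in_W vw) xv.
Qed.

Lemma Wreach_connect u v : Wreach G W u v -> connect (eN G) u v.
Proof.
case/WreachP => w [_ _ uw] wv.
by apply: connect_trans (connect_eW_eN uw) (connect1 _); rewrite eNE.
Qed.

Lemma marg_edgeP a b :
  reflect [/\ a \in V', b \in V' & edge G a b \/ exists2 u, edge G a u & Wreach G W u b]
          (edge M a b).
Proof.
apply: (iffP and3P) => [[aV bV /orP[ab|/existsP[u /andP[ub au]]]]|[-> -> [ab|[u au ub]]]].
- by split=> //; left.
- by split=> //; right; exists u.
- by rewrite ab.
- by split=> //; apply/orP; right; apply/existsP; exists u; rewrite ub au.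
Qed.

Lemma marg_edge a b : a \in V' -> b \in V' -> edge G a b -> edge M a b.
Proof. by move=> aV bV ab; apply/marg_edgeP; split=> //; left. Qed.

Lemma marg_edge_Wreach a u b : a \in V' -> b \in V' -> edge G a u -> Wreach G W u b -> edge M a b.
Proof. by move=> aV bV au ub; apply/marg_edgeP; split=> //; right; exists u. Qed.

Lemma eN_margE a b : eN M a b = edge M a b.
Proof. by rewrite /eN; case/boolP: (edge M a b) => [/marg_edgeP[-> ->]|]; rewrite ?andbF. Qed.

Definition marg_reach a s :=
  (s \notin W /\ connect (eN M) a s) \/
  exists2 u, u \in V' /\ connect (eN M) a u &
    exists2 w, w \in W /\ edge G u w & connect (eW G W) w s.

Lemma marg_reach_edge a s x : marg_reach a s -> edge G s x -> marg_reach a x.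
Proof.
move=> reach_s sx; have /andP[sV xV] := edge_nodes sx.
case: reach_s => [[sW as_]|[u [uV au] [w [wW uw] ws]]]; case/boolP: (x \in W) => xW.
- by right; exists s; [rewrite !inE sW sV | exists x; rewrite ?connect0].
- left; split=> //; apply: connect_trans as_ (connect1 _).
  by rewrite eN_margE marg_edge // !inE ?sW ?xW ?sV ?xV.
- right; exists u => //; exists w => //; apply: (connect_trans ws (connect1 _)).
  by rewrite /eW (connect_eW_in_W wW ws) xW sx.
- left; split=> //; apply: connect_trans au (connect1 _); rewrite eN_margE.
  have xV' : x \in V' by rewrite !inE xW xV.
  apply: (marg_edge_Wreach uV xV' uw); apply/WreachP; exists s => //.
  by split=> //; apply: connect_eW_in_W ws.
Qed.

Lemma connect_marg a b : a \notin W -> b \notin W -> connect (eN M) a b = connect (eN G) a b.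
Proof.
move=> aW bW; apply/idP/idP.
  apply: connect_sub => x y; rewrite eN_margE => /marg_edgeP[_ _ [xy|[u xu uy]]].
    by apply: connect1; rewrite eNE.
  by apply: connect_trans (connect1 _) (Wreach_connect uy); rewrite eNE.
case/connectP => p + b_last; move: bW; rewrite {b}b_last.
have: marg_reach a a by left; rewrite connect0.
elim: p {2 3 4 6}a => [|x p IH] s /= reach_s; last first.
  by move=> xW /andP[]; rewrite eNE => /(marg_reach_edge reach_s)/IH; apply.
by case: reach_s => [[]|[u _ [w [wW _] /(connect_eW_in_W wW) ->]]].
Qed.

Lemma Sc_marg a b : a \notin W -> b \notin W -> (a \in Sc M b) = (a \in Sc G b).
Proof. by move=> aW bW; rewrite !ScE !connect_marg. Qed.

Lemma exit_W v w : v \in W -> connect (eN G) v w -> w \notin W ->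
  exists2 c, c \in V' /\ Wreach G W v c & connect (eN G) c w.
Proof.
move=> vW /connectP[p + ->]; move: (vW) (connect0 (eW G W) v).
elim: p {1 3 4 5 7}v => [|x p IH] u uW vu /=; first by rewrite uW.
case/andP; rewrite eNE => ux ux_p; have /andP[_ xV] := edge_nodes ux.
case/boolP: (x \in W) => xW lastW.
  by apply: IH => //; apply: connect_trans vu (connect1 _); rewrite /eW uW xW.
exists x; last by apply/connectP; exists p.
by split; [rewrite !inE xW | apply/WreachP; exists u].
Qed.

Section Conditioning.
Variable Z : {set T}.
Hypothesis ZW : {in Z, forall z, z \notin W}.

Lemma notin_W_Z x : x \in W -> x \notin Z.
Proof. by move=> xW; apply: contraL xW; apply: ZW. Qed.

Lemma AncS_marg v : v \notin W -> (v \in AncS M Z) = (v \in AncS G Z).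
Proof.
move=> vW; apply/AncSP/AncSP => -[z zZ vz]; exists z => //.
  by rewrite -connect_marg // ZW.
by rewrite connect_marg // ZW.
Qed.

Lemma exit_W_AncS v : v \in W -> v \in AncS G Z ->
  exists2 c, c \in V' /\ Wreach G W v c & c \in AncS G Z.
Proof.
move=> vW /AncSP[z zZ vz]; have [c cV cz] := exit_W vW vz (ZW zZ).
by exists c => //; apply/AncSP; exists z.
Qed.

End Conditioning.

Definition covers F x := (x \in F :\: W) || [exists u in F :&: W, Wreach G W u x].

Lemma coversP F x :
  reflect (x \in F /\ x \notin W \/ exists2 u, u \in F :&: W & Wreach G W u x) (covers F x).
Proof.
apply: (iffP orP) => [[|/existsP[u /andP[uFW ux]]]|[[xF xW]|[u uFW ux]]].
- by rewrite !inE => /andP[xW xF]; left.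
- by right; exists u.
- by left; rewrite !inE xW xF.
- by right; apply/existsP; exists u; rewrite uFW.
Qed.

Lemma covers_Wreach F u x : u \in F -> Wreach G W u x -> covers F x.
Proof. by move=> uF ux; apply/coversP; right; exists u; rewrite // inE uF (Wreach_in_W ux). Qed.

Lemma marg_hyp_pairP a b : a \in V' -> b \in V' ->
  reflect (exists2 F, F \in hyp G /\ F \subset [set a; b] :|: W & covers F a /\ covers F b)
          ([set a; b] \in hyp M).
Proof.
move=> aV bV; rewrite inE; apply: (iffP andP) => [[_ /existsP[F /and3P[FG Fab /forallP cov]]]|].
  by exists F => //; split; [apply: (implyP (cov a)) | apply: (implyP (cov b))];
     rewrite ?set21 ?set22.
case=> F [FG Fab] [Fa Fb]; split.
  by apply/subsetP => x /set2P[]->.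
by apply/existsP; exists F; rewrite FG Fab; apply/forallP => x; apply/implyP => /set2P[]->.
Qed.

Lemma marg_step_Fwd a b : step_ok M a Fwd b = edge M a b.
Proof. by rewrite /step_ok; case/boolP: (edge M a b) => [/marg_edgeP[-> ->]|]; rewrite ?andbF. Qed.

Lemma marg_step_Bwd a b : step_ok M a Bwd b = edge M b a.
Proof. by rewrite /step_ok; case/boolP: (edge M b a) => [/marg_edgeP[-> ->]|]; rewrite ?andbF. Qed.

Lemma marg_step_Bi a b F : a \in V' -> b \in V' -> a != b ->
  F \in hyp G -> F \subset [set a; b] :|: W -> covers F a -> covers F b -> step_ok M a Bi b.
Proof.
move=> aV bV ab FG Fab Fa Fb; rewrite /step_ok /= aV bV ab.
by apply/marg_hyp_pairP => //; exists F.
Qed.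

End Marginal.

Section Lift.
Variables (T : finType) (G : hedg T) (W Z : {set T}).
Hypothesis wfG : hedg_wf G.
Hypothesis ZW : {in Z, forall z, z \notin W}.
Implicit Types (a b u v w : T) (t : step T) (l : seq (step T)).

Local Notation M := (marg G W).
Local Notation V' := (nodes G :\: W).

Lemma step_ok_Fwd a b : edge G a b -> step_ok G a Fwd b.
Proof. by move=> ab; rewrite /step_ok ab andbT edge_nodes. Qed.

Lemma step_ok_Bwd a b : edge G b a -> step_ok G a Bwd b.
Proof. by move=> ba; rewrite /step_ok ba andbT andbC edge_nodes. Qed.

Lemma step_ok_Bi F a b : F \in hyp G -> a \in F -> b \in F -> a != b -> step_ok G a Bi b.
Proof.
case: wfG => _ FV _ sub FG aF bF ab; rewrite /step_ok /= !(subsetP (FV F FG)) // ab.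
by apply: sub FG _; apply/subsetP => x /set2P[]->.
Qed.

Definition transit t1 t2 :=
  ~~ (head_at_next (kind t1) && head_at_prev (kind t2)) && (dst t1 \notin Z).

Lemma transit_open H t1 t2 : transit t1 t2 -> open_junction H Z t1 t2.
Proof. by case/andP => nc tZ; rewrite /open_junction /open_at (negbTE nc) (negbTE tZ). Qed.

Definition clear_walk a b t l :=
  [/\ chained a (t :: l), all (step_valid G) (t :: l), steps_end a (t :: l) = b & path transit t l].

Lemma clear_walk1 a k b : step_ok G a k b -> clear_walk a b (Step a k b) [::].
Proof. by move=> ab; split; rewrite /= ?eqxx ?andbT. Qed.

Lemma clear_walk_cat a m b t1 l1 t2 l2 :
  clear_walk a m t1 l1 -> clear_walk m b t2 l2 -> m \notin Z ->
  ~~ (head_at_next (kind (last t1 l1)) && head_at_prev (kind t2)) ->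
  clear_walk a b t1 (l1 ++ t2 :: l2).
Proof.
move=> [ch1 ok1 end1 p1] [ch2 ok2 end2 p2] mZ nc; split.
- by rewrite -cat_cons chained_cat ch1 end1.
- by rewrite -cat_cons all_cat ok1.
- by rewrite -cat_cons steps_end_cat end1.
- by rewrite cat_path p1 /= p2 /transit nc -(steps_end_cons a) end1 mZ.
Qed.

Lemma Wreach_clear_Fwd u b : Wreach G W u b ->
  exists t l, [/\ clear_walk u b t l, kind t = Fwd & kind (last t l) = Fwd].
Proof.
case/WreachP => w [uW _ /connectP[p + ->]] wb.
elim: p u uW wb => [|x p IH] u uW /= => [ub _|pb /andP[/and3P[_ xW ux] xp]].
  by exists (Step u Fwd b), [::]; split=> //; apply/clear_walk1/step_ok_Fwd.
have [t [l [cl kt kl]]] := IH x xW pb xp.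
exists (Step u Fwd x), (t :: l); split=> //.
by apply: clear_walk_cat (clear_walk1 (step_ok_Fwd ux)) cl _ _; rewrite ?kt // (notin_W_Z ZW xW).
Qed.

Lemma Wreach_clear_Bwd u a : Wreach G W u a ->
  exists t l, [/\ clear_walk a u t l, kind t = Bwd & kind (last t l) = Bwd].
Proof.
case/WreachP => w [uW _ /connectP[p + ->]] wa.
elim: p u uW wa => [|x p IH] u uW /= => [ua _|pa /andP[/and3P[_ xW ux] xp]].
  by exists (Step a Bwd u), [::]; split=> //; apply/clear_walk1/step_ok_Bwd.
have [t [l [cl kt kl]]] := IH x xW pa xp.
exists t, (rcons l (Step x Bwd u)); rewrite last_rcons -cats1; split=> //.
by apply: clear_walk_cat cl (clear_walk1 (step_ok_Bwd ux)) _ _; rewrite ?kl // (notin_W_Z ZW xW).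
Qed.

Definition lifts t t0 l :=
  [/\ head_at_prev (kind t0) = head_at_prev (kind t), sc_at_src M t -> sc_at_src G t0,
      head_at_next (kind (last t0 l)) = head_at_next (kind t) &
      sc_at_dst M t -> sc_at_dst G (last t0 l)].

Lemma lift_Fwd a b : edge M a b ->
  exists t0 l, clear_walk a b t0 l /\ lifts (Step a Fwd b) t0 l.
Proof.
case/marg_edgeP => /V'_notin_W aW /V'_notin_W bW [ab|[u au ub]].
  exists (Step a Fwd b), [::]; split; first exact/clear_walk1/step_ok_Fwd.
  by split=> //; rewrite /sc_at_src /= Sc_marg.
have [t [l [cl kt kl]]] := Wreach_clear_Fwd ub.
exists (Step a Fwd u), (t :: l); split.
  apply: clear_walk_cat (clear_walk1 (step_ok_Fwd au)) cl _ _;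
  by rewrite ?kt // (notin_W_Z ZW (Wreach_in_W ub)).
split=> //=; last by rewrite /sc_at_dst kl.
  rewrite /sc_at_src /= Sc_marg // !ScE => /andP[ba _].
  by rewrite (connect_trans (Wreach_connect wfG ub) ba) connect1 // eNE.
by rewrite kl.
Qed.

Lemma lift_Bwd a b : edge M b a ->
  exists t0 l, clear_walk a b t0 l /\ lifts (Step a Bwd b) t0 l.
Proof.
case/marg_edgeP => /V'_notin_W bW /V'_notin_W aW [ba|[u bu ua]].
  exists (Step a Bwd b), [::]; split; first exact/clear_walk1/step_ok_Bwd.
  by split=> //; rewrite /sc_at_dst /= Sc_marg.
have [t [l [cl kt kl]]] := Wreach_clear_Bwd ua.
exists t, (rcons l (Step u Bwd b)); split.
  rewrite -cats1; apply: clear_walk_cat cl (clear_walk1 (step_ok_Bwd bu)) _ _;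
  by rewrite ?kl // (notin_W_Z ZW (Wreach_in_W ua)).
split; rewrite ?last_rcons /sc_at_src ?kt //.
rewrite /sc_at_dst /= Sc_marg // !ScE => /andP[ab _].
by rewrite (connect_trans (Wreach_connect wfG ua) ab) connect1 // eNE.
Qed.

Lemma lift_Bi a b : step_ok M a Bi b ->
  exists t0 l, clear_walk a b t0 l /\ lifts (Step a Bi b) t0 l.
Proof.
case/and3P => aV bV /andP[ab /(marg_hyp_pairP aV bV)[F [FG _] [Fa Fb]]].
suff [t0 [l [cl h0 hl]]] : exists t0 l,
    [/\ clear_walk a b t0 l, head_at_prev (kind t0) & head_at_next (kind (last t0 l))].
  exists t0, l; split=> //; split; rewrite ?h0 ?hl // /sc_at_src /sc_at_dst.
    by case: (kind t0) h0.
  by case: (kind (last t0 l)) hl.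
have neqW x y : x \notin W -> y \in W -> x != y by move=> xW yW; apply: contraNneq xW => ->.
have uZ u : u \in W -> u \notin Z := @notin_W_Z _ _ _ ZW u.
case/coversP: Fa => [[aF aW] | [u /setIP[uF uW] ua]];
case/coversP: Fb => [[bF bW] | [w /setIP[wF wW] wb]].
- by exists (Step a Bi b), [::]; split=> //; apply/clear_walk1/(step_ok_Bi FG).
- have [t [l [cl kt kl]]] := Wreach_clear_Fwd wb.
  exists (Step a Bi w), (t :: l); split; rewrite //= ?kl //.
  have aw := neqW _ _ aW wW.
  by apply: clear_walk_cat (clear_walk1 (step_ok_Bi FG aF wF aw)) cl _ _; rewrite ?kt ?uZ.
- have [t [l [cl kt kl]]] := Wreach_clear_Bwd ua.
  exists t, (rcons l (Step u Bi b)); split; rewrite ?kt ?last_rcons // -cats1.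
  have ub : u != b by rewrite eq_sym neqW.
  by apply: clear_walk_cat cl (clear_walk1 (step_ok_Bi FG uF bF ub)) _ _; rewrite ?kl ?uZ.
have [t [l [cl kt kl]]] := Wreach_clear_Bwd ua.
have [t' [l' [cl' kt' kl']]] := Wreach_clear_Fwd wb.
have [uw|uw] := eqVneq u w.
  rewrite -uw in cl'; exists t, (l ++ t' :: l'); split; rewrite ?kt ?last_cat //= ?kl' //.
  by apply: clear_walk_cat cl cl' _ _; rewrite ?kl ?uZ.
exists t, (l ++ Step u Bi w :: t' :: l'); split; rewrite ?kt ?last_cat //= ?kl' //.
apply: clear_walk_cat cl _ _ _; rewrite ?kl ?uZ //.
by apply: clear_walk_cat (clear_walk1 (step_ok_Bi FG uF wF uw)) cl' _ _; rewrite ?kt' ?uZ.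
Qed.

Lemma lift_step t : step_valid M t ->
  exists t0 l, clear_walk (src t) (dst t) t0 l /\ lifts t t0 l.
Proof.
case: t => a [] b; rewrite /step_valid /=.
- by rewrite marg_step_Fwd; apply: lift_Fwd.
- by rewrite marg_step_Bwd; apply: lift_Bwd.
- exact: lift_Bi.
Qed.

Lemma open_at_marg a (hl okl okl' hr okr okr' : bool) : a \notin W ->
  open_at M Z a hl okl hr okr -> (okl -> okl') -> (okr -> okr') -> open_at G Z a hl okl' hr okr'.
Proof.
move=> aW; rewrite /open_at AncS_marg //; case: ifP => // _ /implyP open l' r'.
by apply/implyP => /open /andP[/l' -> /r'].
Qed.

Lemma open_from_lift a (hl okl okl' : bool) ms :
  a \notin W -> chained a ms -> all (step_valid M) ms -> open_from M Z a hl okl ms ->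
  (okl -> okl') ->
  exists2 gs, [/\ chained a gs, all (step_valid G) gs & steps_end a gs = steps_end a ms] &
              open_from G Z a hl okl' gs.
Proof.
elim: ms a hl okl okl' => [|t ms IH] a hl okl okl' aW; first by exists [::].
case/andP => /eqP src_t ch /andP[valid_t valid]; subst a.
rewrite open_from_cons => /andP[open_a open] l'.
have [t0 [l [[ch0 valid0 end0 pth] [h0 src0 h1 dst0]]]] := lift_step valid_t.
have dW : dst t \notin W by case/and3P: valid_t => _ /V'_notin_W.
have last0 : dst (last t0 l) = dst t by rewrite -(steps_end_cons (src t)).
rewrite -h1 in open; have [gs [chg validg endg] openg] := IH _ _ _ _ dW ch valid open dst0.
exists (t0 :: l ++ gs); first split.
- by rewrite -cat_cons chained_cat ch0 end0.
- by rewrite -cat_cons all_cat valid0.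
- by rewrite -cat_cons steps_end_cat end0 endg.
rewrite open_from_cat last0 openg andbT /= (sub_path (@transit_open G) pth) andbT.
by rewrite -h0 in open_a; apply: open_at_marg aW open_a l' src0.
Qed.

Lemma open_walk_lift a b ms : open_walk M Z a b ms -> exists gs, open_walk G Z a b gs.
Proof.
case=> aV ch valid <- /and3P[aZ bZ open].
have [gs [chg validg endg] openg] := open_from_lift (V'_notin_W aV) ch valid open id.
by exists gs; split; rewrite ?endg ?aZ ?bZ //; case/setDP: aV.
Qed.

End Lift.

Section Project.
Variables (T : finType) (G : hedg T) (W Z : {set T}).
Hypothesis wfG : hedg_wf G.
Hypothesis ZW : {in Z, forall z, z \notin W}.
Variable y : T.
Hypothesis yW : y \notin W.
Hypothesis yZ : y \notin Z.
Implicit Types (a c n u v : T) (F : {set T}) (t : step T) (r : seq (step T)).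

Local Notation M := (marg G W).
Local Notation V' := (nodes G :\: W).

Definition walk_to_y v r := [&& chained v r, all (step_valid G) r & steps_end v r == y].

Definition marg_open_to_y a (hl okl : bool) :=
  exists2 ms, [/\ chained a ms, all (step_valid M) ms & steps_end a ms = y] &
              open_from M Z a hl okl ms.

Lemma walk_to_y_cons v t r :
  walk_to_y v (t :: r) -> [/\ src t = v, step_valid G t & walk_to_y (dst t) r].
Proof. by case/and3P => /andP[/eqP -> ch] /andP[-> valid] end_r; split=> //; apply/and3P. Qed.

Lemma walk_to_y_nil v : walk_to_y v [::] -> v = y.
Proof. by move/and3P => [_ _ /eqP]. Qed.

Lemma marg_open_cons t (hl okl : bool) : step_valid M t ->
  open_at M Z (src t) hl okl (head_at_prev (kind t)) (sc_at_src M t) ->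
  marg_open_to_y (dst t) (head_at_next (kind t)) (sc_at_dst M t) -> marg_open_to_y (src t) hl okl.
Proof.
move=> valid_t open_t [ms [ch valid end_ms] open]; exists (t :: ms).
  by rewrite /= eqxx valid_t.
by rewrite open_from_cons open_t.
Qed.

Lemma open_at_marg_head a (hl okl : bool) : a \notin W ->
  (hl -> a \in AncS G Z) -> (a \in Z -> okl) -> open_at M Z a hl okl true true.
Proof.
move=> aW anc ok; rewrite /open_at andbT AncS_marg //.
by case: hl anc => [/(_ isT)//|_]; rewrite andbT; apply/implyP.
Qed.

Definition hyp_reach F v := v \in F \/ exists2 u, u \in F :&: W & Wreach G W u v.

Lemma hyp_reach_Wreach F v x : v \in W -> hyp_reach F v -> Wreach G W v x ->
  exists2 u, u \in F :&: W & Wreach G W u x.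
Proof.
move=> vW [vF|[u uFW uv]] vx; first by exists v; rewrite ?inE ?vF.
by exists u => //; apply: Wreach_trans uv vx.
Qed.

(* The projection is proved by induction on the part [r] of the G-walk still to be
   projected, simultaneously for four invariants.  In each of them [a] is the current
   node outside W, and [hl], [okl] describe how the M-walk to be built is entered at [a].
   [proj_out]: [r] starts at [a], where it is entered in the context [gh], [gok]. *)
Definition proj_out r := forall a (hl okl gh gok : bool), a \in V' -> walk_to_y a r ->
  open_from G Z a gh gok r -> (hl -> (a \in AncS G Z) || gh) -> (a \in Z -> gok -> okl) ->
  (gh -> gok) -> marg_open_to_y a hl okl.

(* [proj_down]: [r] continues from [v] after a -> u -> ... -> v inside W. *)
Definition proj_down r := forall a u v (hl okl : bool), a \in V' -> a \notin Z -> u \in W ->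
  edge G a u -> connect (eW G W) u v -> v \in W -> walk_to_y v r -> open_from G Z v true true r ->
  marg_open_to_y a hl okl.

(* [proj_up]: [r] continues from [v], and v -> ... -> a through W. *)
Definition proj_up r := forall a v (hl okl : bool), a \in V' -> v \in W -> Wreach G W v a ->
  walk_to_y v r -> open_from G Z v false true r -> (hl -> a \in AncS G Z) -> (a \in Z -> okl) ->
  marg_open_to_y a hl okl.

(* [proj_hyp]: [r] continues from [v], which is linked to [a] through the hyperedge [F]. *)
Definition proj_hyp r := forall a v F (hl okl : bool), a \in V' -> v \in W -> F \in hyp G ->
  F \subset a |: W -> covers G W F a -> hyp_reach F v ->
  walk_to_y v r -> open_from G Z v true true r -> (hl -> a \in AncS G Z) -> (a \in Z -> okl) ->
  marg_open_to_y a hl okl.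

Lemma proj_out_hyp r a n F (hl okl : bool) : proj_out r -> a \in V' -> n \in V' -> F \in hyp G ->
  F \subset [set a; n] :|: W -> covers G W F a -> covers G W F n -> walk_to_y n r ->
  open_from G Z n true true r -> (hl -> a \in AncS G Z) -> (a \in Z -> okl) ->
  marg_open_to_y a hl okl.
Proof.
move=> out aV nV FG Fan Fa Fn wn open_n anc_a ok_a.
have [an|an] := eqVneq a n.
  by subst n; apply: (out _ _ _ true true) => // [_|/ok_a]; rewrite ?orbT.
apply: (marg_open_cons (t := Step a Bi n)) => /=.
- exact: marg_step_Bi aV nV an FG Fan Fa Fn.
- exact: open_at_marg_head (V'_notin_W aV) anc_a ok_a.
- by apply: (out _ _ _ true true) => // _; rewrite orbT.
Qed.

(* A non-collider [n] in Z keeps the walk inside its strongly connected component, so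
   [v] leaves W towards [n] at some [c], and the projection runs a <-> c <- n. *)
Lemma proj_up_Bwd_Z r a v n (hl okl : bool) : proj_out r -> a \in V' -> v \in W ->
  Wreach G W v a -> n \in V' -> n \in Z -> edge G n v -> walk_to_y n r ->
  open_from G Z n false (v \in Sc G n) r -> (hl -> a \in AncS G Z) -> (a \in Z -> okl) ->
  marg_open_to_y a hl okl.
Proof.
move=> out aV vW va nV nZ nv wn open_n anc_a ok_a.
have vn : v \in Sc G n.
  case: r out wn open_n => [_ /walk_to_y_nil ny|t r _ _ /andP[]]; first by move: yZ; rewrite -ny nZ.
  by rewrite /open_at /= nZ => /andP[].
have [c [cV vc] cn] : exists2 c, c \in V' /\ Wreach G W v c & connect (eN G) c n.
  by move: vn; rewrite ScE => /andP[vn _]; exact: (exit_W wfG vW vn (V'_notin_W nV)).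
have out_c (hl' okl' : bool) :
    (hl' -> c \in AncS G Z) -> (c \in Z -> okl') -> marg_open_to_y c hl' okl'.
  move=> anc_c ok_c; apply: (marg_open_cons (t := Step c Bwd n)) => /=.
  - by rewrite /step_valid /= marg_step_Bwd (marg_edge_Wreach nV cV nv vc).
  - exact: open_at_marg_head (V'_notin_W cV) anc_c ok_c.
  apply: (out _ _ _ false (v \in Sc G n)) => // _ _.
  rewrite /sc_at_dst /= Sc_marg ?(V'_notin_W cV) ?(V'_notin_W nV) // ScE cn.
  by rewrite (connect_trans (connect1 _) (Wreach_connect wfG vc)) // eNE.
have [ac|ac] := eqVneq a c; first by subst c; apply: out_c.
apply: (marg_open_cons (t := Step a Bi c)) => /=.
- have vV : v \in nodes G by case/andP: (edge_nodes wfG nv).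
  apply: (marg_step_Bi aV cV ac (hyp1 wfG vV)); rewrite ?sub1set ?inE ?vW ?orbT //.
  + exact: covers_Wreach (set11 v) va.
  + exact: covers_Wreach (set11 v) vc.
- exact: open_at_marg_head (V'_notin_W aV) anc_a ok_a.
by apply: out_c => // _; apply: AncS_connect cn (mem_AncS G nZ).
Qed.

Lemma proj_up_cons t r : proj_out r -> proj_up r -> proj_hyp r -> proj_up (t :: r).
Proof.
move=> out up hyp a v hl okl aV vW va /walk_to_y_cons[].
case: t => _ k n /= -> valid_t wn /andP[_]; rewrite path_open_junction /= => open_n anc_a ok_a.
move: valid_t; rewrite /step_valid /step_ok /= => /and3P[vV nV' kvn].
have vF := set11 v; have Fa := covers_Wreach vF va; have v1 := hyp1 wfG vV.
have v_sub A : [set v] \subset A :|: W by rewrite sub1set inE vW orbT.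
have [nW|nW] := boolP (n \in W).
  case: k kvn open_n => [vn|nv|/andP[_ vnF]] open_n.
  - apply: (hyp a n _ _ _ aV nW v1 (v_sub _) Fa _ wn open_n anc_a ok_a).
    by right; exists v; rewrite ?inE ?eqxx ?vW ?(Wreach_edge vW vn).
  - have na := Wreach_trans (Wreach_edge nW nv) va.
    exact: (up a n _ _ aV nW na wn (open_from_neutral (notin_W_Z ZW nW) open_n) anc_a ok_a).
  - apply: (hyp a n _ _ _ aV nW vnF _ (covers_Wreach (set21 v n) va) _ wn open_n anc_a ok_a).
      by apply/subsetP => x /set2P[]->; rewrite !inE ?vW ?nW orbT.
    by left; apply: set22.
have nV : n \in V' by rewrite !inE nW.
case: k kvn open_n => [vn|nv|/andP[_ vnF]] open_n.
- have Fn := covers_Wreach vF (Wreach_edge vW vn).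
  exact: (proj_out_hyp out aV nV v1 (v_sub _) Fa Fn wn open_n anc_a ok_a).
- have [nZ|nZ] := boolP (n \in Z).
    exact: proj_up_Bwd_Z out aV vW va nV nZ nv wn open_n anc_a ok_a.
  apply: (marg_open_cons (t := Step a Bwd n)) => /=.
  + by rewrite /step_valid /= marg_step_Bwd (marg_edge_Wreach nV aV nv va).
  + exact: open_at_marg_head (V'_notin_W aV) anc_a ok_a.
  by apply: (out _ _ _ false (v \in Sc G n)) => //; rewrite (negPf nZ).
- apply: (proj_out_hyp out aV nV vnF _ (covers_Wreach (set21 v n) va)) => //.
    by apply/subsetP => x /set2P[]->; rewrite !inE ?vW ?eqxx ?orbT.
  by apply/coversP; left; rewrite set22.
Qed.

Lemma proj_hyp_collider r a v F (hl okl : bool) : proj_up r -> a \in V' -> v \in W ->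
  F \in hyp G -> F \subset a |: W -> covers G W F a -> hyp_reach F v -> v \in AncS G Z ->
  walk_to_y v r -> open_from G Z v false true r -> (hl -> a \in AncS G Z) -> (a \in Z -> okl) ->
  marg_open_to_y a hl okl.
Proof.
move=> up aV vW FG Fa_sub Fa Fv vZ wv open_v anc_a ok_a.
have [d [dV vd] dZ] := exit_W_AncS wfG ZW vW vZ.
have [ad|ad] := eqVneq a d; first by subst d; apply: (up a v).
apply: (marg_open_cons (t := Step a Bi d)) => /=.
- apply: (marg_step_Bi aV dV ad FG) => //.
    by apply: (subset_trans Fa_sub); apply: setSU; rewrite sub1set set21.
  by have [u /setIP[uF _] ud] := hyp_reach_Wreach vW Fv vd; apply: covers_Wreach uF ud.
- exact: open_at_marg_head (V'_notin_W aV) anc_a ok_a.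
exact: (up d v).
Qed.

Lemma proj_hyp_cons t r : proj_out r -> proj_up (t :: r) -> proj_hyp r -> proj_hyp (t :: r).
Proof.
move=> out up hyp a v F hl okl aV vW FG Fa_sub Fa Fv wv open_v anc_a ok_a.
have collider : head_at_prev (kind t) -> marg_open_to_y a hl okl.
  move=> /(open_from_collider open_v) vZ.
  have open_v' := open_from_neutral (notin_W_Z ZW vW) open_v.
  exact: proj_hyp_collider up aV vW FG Fa_sub Fa Fv vZ wv open_v' anc_a ok_a.
case/walk_to_y_cons: wv open_v collider; case: t {up} => _ [] n /= -> valid_t wn; last 2 first.
- by move=> _ /(_ isT).
- by move=> _ /(_ isT).
move=> /andP[_]; rewrite path_open_junction /= => open_n _.
move: valid_t; rewrite /step_valid /step_ok /= => /and3P[_ nV' vn].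
have [u uFW un] := hyp_reach_Wreach vW Fv (Wreach_edge vW vn).
have [nW|nW] := boolP (n \in W); first by apply: (hyp a n F) => //; right; exists u.
have nV : n \in V' by rewrite !inE nW.
apply: (proj_out_hyp out aV nV FG _ Fa) => //.
  by apply: (subset_trans Fa_sub); apply: setSU; rewrite sub1set set21.
by case/setIP: uFW => uF _; apply: covers_Wreach uF un.
Qed.

Lemma proj_down_cons t r : proj_out r -> proj_up (t :: r) -> proj_down r -> proj_down (t :: r).
Proof.
move=> out up down a u v hl okl aV aZ uW au uv vW wv open_v.
have open_a (okr : bool) : open_at M Z a hl okl false okr by rewrite /open_at andbF (negPf aZ).
have collider : head_at_prev (kind t) -> marg_open_to_y a hl okl.
  move=> /(open_from_collider open_v) vZ; have [d [dV vd] dZ] := exit_W_AncS wfG ZW vW vZ.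
  apply: (marg_open_cons (t := Step a Fwd d)) => //=.
    by rewrite /step_valid /= marg_step_Fwd (marg_edge_Wreach aV dV au (connect_Wreach uW uv vd)).
  exact: (up d v) (open_from_neutral (notin_W_Z ZW vW) open_v) _ _.
case/walk_to_y_cons: wv open_v collider; case: t {up} => _ [] n /= -> valid_t wn; last 2 first.
- by move=> _ /(_ isT).
- by move=> _ /(_ isT).
move=> /andP[_]; rewrite path_open_junction /= => open_n _.
move: valid_t; rewrite /step_valid /step_ok /= => /and3P[_ nV' vn].
have [nW|nW] := boolP (n \in W).
  by apply: (down a u n) => //; apply: connect_trans uv (connect1 _); rewrite /eW vW nW.
have nV : n \in V' by rewrite !inE nW.
apply: (marg_open_cons (t := Step a Fwd n)) => //=.
  by rewrite /step_valid /= marg_step_Fwd (marg_edge_Wreach aV nV au) //; apply/WreachP; exists v.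
by apply: (out _ _ _ true true) => // _; rewrite orbT.
Qed.

Lemma open_at_entry a k n (hl okl gh gok : bool) :
  open_at G Z a gh gok (head_at_prev k) (sc_at_src G (Step a k n)) ->
  (hl -> (a \in AncS G Z) || gh) -> (a \in Z -> gok -> okl) -> (gh -> gok) ->
  [/\ head_at_prev k -> hl -> a \in AncS G Z, a \in Z -> okl & k = Fwd -> a \in Z -> n \in Sc G a].
Proof.
rewrite /open_at => open anc ok gok_ok; split.
- by move=> hp /anc /orP[//|gh_]; move: open; rewrite gh_ hp.
- move=> aZ; apply: (ok aZ); move: open; case: ifP => [/andP[/gok_ok //]|_].
  by rewrite aZ => /andP[].
- by move=> k_Fwd aZ; move: open; rewrite k_Fwd /= andbF aZ => /andP[].
Qed.

Lemma proj_out_step_out r a k n (hl okl : bool) : proj_out r -> a \in V' -> n \in V' ->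
  step_ok G a k n -> walk_to_y n r ->
  open_from G Z n (head_at_next k) (sc_at_dst G (Step a k n)) r ->
  (head_at_prev k -> hl -> a \in AncS G Z) -> (a \in Z -> okl) ->
  (k = Fwd -> a \in Z -> n \in Sc G a) ->
  marg_open_to_y a hl okl.
Proof.
move=> out aV nV /and3P[_ _ kan] wn open_n anc_a ok_a sc_a.
have [aW nW] := (V'_notin_W aV, V'_notin_W nV).
apply: (marg_open_cons (t := Step a k n)) => /=.
- rewrite /step_valid /=; case: k kan {open_n anc_a sc_a} => [an|na|/andP[an anF]].
  + by rewrite marg_step_Fwd marg_edge.
  + by rewrite marg_step_Bwd marg_edge.
  apply: (marg_step_Bi aV nV an anF (subsetUl _ _)); apply/coversP; left.
    by rewrite set21.
  by rewrite set22.
- rewrite /open_at AncS_marg //; case: ifP => [/andP[hl_ hp]|_]; first exact: anc_a.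
  apply/implyP => aZ; rewrite ok_a //=; case: k sc_a {kan open_n anc_a} => // sc_a.
  by rewrite /sc_at_src /= Sc_marg //; apply: sc_a.
- apply: (out _ _ _ (head_at_next k) (sc_at_dst G (Step a k n))) => //.
  + by move=> ->; rewrite orbT.
  + by case: k {kan open_n anc_a sc_a} => //= _; rewrite /sc_at_dst /= Sc_marg.
  + by case: k {kan open_n anc_a sc_a}.
Qed.

Lemma proj_out_step_in r a k n (hl okl : bool) : proj_down r -> proj_up r -> proj_hyp r ->
  a \in V' -> n \in W -> step_ok G a k n -> walk_to_y n r ->
  open_from G Z n (head_at_next k) (sc_at_dst G (Step a k n)) r ->
  (head_at_prev k -> hl -> a \in AncS G Z) -> (a \in Z -> okl) ->
  (k = Fwd -> a \in Z -> n \in Sc G a) ->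
  marg_open_to_y a hl okl.
Proof.
move=> down up hyp aV nW /and3P[_ _ kan] wn open_n anc_a ok_a sc_a.
have aW := V'_notin_W aV; have nZ := notin_W_Z ZW nW.
case: k kan open_n anc_a sc_a => [an|na|/andP[_ anF]] open_n anc_a sc_a.
- have [aZ|aZ] := boolP (a \in Z); last first.
    exact: (down a n n _ _ aV aZ nW an (connect0 _ _) nW wn open_n).
  have [c [cV nc] ca] : exists2 c, c \in V' /\ Wreach G W n c & connect (eN G) c a.
    by move: (sc_a erefl aZ); rewrite ScE => /andP[na _]; exact: (exit_W wfG nW na aW).
  apply: (marg_open_cons (t := Step a Fwd c)) => /=.
  + by rewrite /step_valid /= marg_step_Fwd (marg_edge_Wreach aV cV an nc).
  + rewrite /open_at andbF aZ ok_a //= /sc_at_src /= Sc_marg ?(V'_notin_W cV) // ScE ca.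
    by apply: connect_trans (connect1 _) (Wreach_connect wfG nc); rewrite eNE.
  apply: (up c n) (open_from_neutral nZ open_n) _ _ => // _.
  exact: AncS_connect ca (mem_AncS G aZ).
- exact: (up a n) (Wreach_edge nW na) wn (open_from_neutral nZ open_n) (anc_a isT) ok_a.
- apply: (hyp a n [set a; n]) (anc_a isT) ok_a => //.
  + by apply/subsetP => x /set2P[]->; rewrite !inE ?eqxx ?nW ?orbT.
  + by apply/coversP; left; rewrite set21.
  + by left; apply: set22.
Qed.

Lemma proj_out_cons t r : proj_out r -> proj_down r -> proj_up r -> proj_hyp r ->
  proj_out (t :: r).
Proof.
move=> out down up hyp a hl okl gh gok aV /walk_to_y_cons[].
case: t => _ k n /= -> valid_t wn /andP[open_a]; rewrite path_open_junction /= => open_n.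
move=> /(open_at_entry open_a)/[apply]/(_ _)/[apply] -[anc_a ok_a sc_a].
have [nW|nW] := boolP (n \in W).
  exact: proj_out_step_in down up hyp aV nW valid_t wn open_n anc_a ok_a sc_a.
have nV : n \in V' by move: valid_t => /and3P[_ nV _]; rewrite !inE nW.
exact: proj_out_step_out out aV nV valid_t wn open_n anc_a ok_a sc_a.
Qed.

Lemma proj_all r : [/\ proj_out r, proj_down r, proj_up r & proj_hyp r].
Proof.
elim: r => [|t r [out down up hyp]].
  split=> [a hl okl gh gok _ /walk_to_y_nil -> _ _ _ _|a u v hl okl|a v hl okl|a v F hl okl].
  - by exists [::].
  - by move=> _ _ _ _ _ vW /walk_to_y_nil vy; move: yW; rewrite -vy vW.
  - by move=> _ vW _ /walk_to_y_nil vy; move: yW; rewrite -vy vW.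
  - by move=> _ vW _ _ _ _ /walk_to_y_nil vy; move: yW; rewrite -vy vW.
have up' := proj_up_cons out up hyp.
split; [exact: proj_out_cons | exact: proj_down_cons | exact: up' | exact: proj_hyp_cons].
Qed.

Lemma open_walk_project a gs :
  a \notin W -> open_walk G Z a y gs -> exists ms, open_walk M Z a y ms.
Proof.
move=> aW [aV ch valid end_gs /and3P[aZ _ open]].
have aV' : a \in V' by rewrite !inE aW.
have wa : walk_to_y a gs by rewrite /walk_to_y ch valid end_gs eqxx.
have [out _ _ _] := proj_all gs.
have [] : marg_open_to_y a false true by apply: (out a false true false true).
by move=> ms [chm validm endm] openm; exists ms; split; rewrite ?aZ ?yZ.
Qed.

End Project.

Theorem mainTheorem6 (T : finType) (G : hedg T) (W X Y Z : {set T}) :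
  hedg_wf G ->
  W \subset nodes G -> X \subset nodes G -> Y \subset nodes G -> Z \subset nodes G ->
  (X :|: Y :|: Z) :&: W = set0 ->
  (sigma_sep G X Y Z <-> sigma_sep (marg G W) X Y Z).
Proof.
move=> wfG _ _ _ _ XYZ_W.
have notW x : x \in X :|: Y :|: Z -> x \notin W.
  by move=> x_in; apply: contraFN (in_set0 x); rewrite -XYZ_W inE x_in.
have ZW : {in Z, forall z, z \notin W} by move=> z zZ; rewrite notW // inE zZ orbT.
have endsW a b : (a \in X) && (b \in Y) || (a \in Y) && (b \in X) -> (a \notin W) && (b \notin W).
  by case/orP => /andP[aXY bXY]; rewrite !notW // !inE ?aXY ?bXY ?orbT.
split=> /sigma_sepP sep; apply/sigma_sepP => a b ms ends open.
  by have [gs] := open_walk_lift wfG ZW open; apply: sep ends.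
have /andP[aW bW] := endsW a b ends; have [_ _ _ _ /and3P[_ bZ _]] := open.
by have [ms'] := open_walk_project wfG ZW bW bZ aW open; apply: sep ends.
Qed.
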